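(* The following varieties do not have the amalgamation property: (1) $\mathsf{SemCRL}$; (2) $\mathsf{SemCIRL}$; (3) $\mathsf{SemFL_e}$; (4) $\mathsf{MTL}$; (5) for every $n\ge 2$, the $n$-potent subvariety of each of the varieties in (1)–(4).
   Context: A residuated lattice is an algebra $(L,\wedge,\vee,\cdot,\backslash,/,1)$ where $(L,\wedge,\vee)$ is a lattice, $(L,\cdot,1)$ is a monoid, and $xy\le z \iff y\le x\backslash z \iff x\le z/y$. It is commutative if $\cdot$ is commutative (then $x\backslash y=y/x$, written $x\to y$), integral if $1$ is the greatest element, and semilinear if it is a subdirect product of totally ordered residuated lattices (for commutative ones, equivalently, it satisfies $(x\to y)\vee(y\to x)\ge 1$). $\mathsf{SemCRL}$: the variety of semilinear commutative residuated lattices. $\mathsf{SemCIRL}$: its integral subvariety. $\mathsf{SemFL_e}$: the variety of semilinear commutative residuated lattices expanded with an additional constant $0$ (no conditions on $0$). $\mathsf{MTL}$: the variety of commutative integral residuated lattices with an additional constant $0$ satisfying $0\le x$ and the prelinearity identity $(x\to y)\vee(y\to x)=1$. An algebra is $n$-potent if it satisfies $x^n=x^{n+1}$. A V-formation in a class $\mathsf{K}$ is a tuple $(\mathbf{P},\mathbf{Q},\mathbf{R},i,j)$ with $\mathbf{P},\mathbf{Q},\mathbf{R}\in\mathsf{K}$ and $i\colon\mathbf{P}\to\mathbf{Q}$, $j\colon\mathbf{P}\to\mathbf{R}$ embeddings; an amalgam in $\mathsf{K}$ is $(\mathbf{D},h,k)$ with $\mathbf{D}\in\mathsf{K}$ and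 embeddings $h\colon\mathbf{Q}\to\mathbf{D}$, $k\colon\mathbf{R}\to\mathbf{D}$ with $h\circ i=k\circ j$. A class has the amalgamation property if every V-formation in it has an amalgam in it. *)

From Stdlib Require Import Arith.

(** Operations of a commutative residuated lattice (L, /\, \/, ., ->, 1).
    In the commutative case x\y = y/x is written x -> y. *)
Record crl_ops (T : Type) := CrlOps {
  rmeet : T -> T -> T;
  rjoin : T -> T -> T;
  rmul  : T -> T -> T;
  rimp  : T -> T -> T;
  rone  : T }.
Arguments rmeet {T} _ _ _.
Arguments rjoin {T} _ _ _.
Arguments rmul {T} _ _ _.
Arguments rimp {T} _ _ _.
Arguments rone {T} _.

Record fle_ops (T : Type) := FleOps {
  fcrl  : crl_ops T;
  rzero : T }.
Arguments fcrl {T} _.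
Arguments rzero {T} _.

Definition rle {T} (o : crl_ops T) (x y : T) : Prop := rmeet o x y = x.

Fixpoint rpow {T} (o : crl_ops T) (x : T) (k : nat) : T :=
  match k with
  | 0 => rone o
  | S k' => rmul o x (rpow o x k')
  end.

Definition is_CRL {T} (o : crl_ops T) : Prop :=
  (forall x y, rmeet o x y = rmeet o y x) /\
  (forall x y, rjoin o x y = rjoin o y x) /\
  (forall x y z, rmeet o x (rmeet o y z) = rmeet o (rmeet o x y) z) /\
  (forall x y z, rjoin o x (rjoin o y z) = rjoin o (rjoin o x y) z) /\
  (forall x y, rmeet o x (rjoin o x y) = x) /\
  (forall x y, rjoin o x (rmeet o x y) = x) /\
  (forall x y z, rmul o x (rmul o y z) = rmul o (rmul o x y) z) /\
  (forall x y, rmul o x y = rmul o y x) /\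
  (forall x, rmul o (rone o) x = x) /\
  (forall x, rmul o x (rone o) = x) /\
  (* residuation: xy <= z iff y <= x -> z  (x <= z/y = y -> z then follows
     by commutativity) *)
  (forall x y z, rle o (rmul o x y) z <-> rle o y (rimp o x z)).

(** Semilinearity for commutative residuated lattices, in its equational
    form (x -> y) \/ (y -> x) >= 1. *)
Definition semilinear {T} (o : crl_ops T) : Prop :=
  forall x y, rle o (rone o) (rjoin o (rimp o x y) (rimp o y x)).

Definition integral {T} (o : crl_ops T) : Prop :=
  forall x, rle o x (rone o).

Definition n_potent {T} (o : crl_ops T) (n : nat) : Prop :=
  forall x, rpow o x n = rpow o x (S n).

Definition SemCRL T (o : crl_ops T) : Prop := is_CRL o /\ semilinear o.
Definition SemCIRL T (o : crl_ops T) : Prop := SemCRL T o /\ integral o.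
Definition SemFLe T (o : fle_ops T) : Prop := SemCRL T (fcrl o).
Definition MTL T (o : fle_ops T) : Prop :=
  is_CRL (fcrl o) /\ integral (fcrl o) /\
  (forall x, rle (fcrl o) (rzero o) x) /\
  (forall x y, rjoin (fcrl o) (rimp (fcrl o) x y) (rimp (fcrl o) y x)
               = rone (fcrl o)).

Definition npot_crl (n : nat) (K : forall T, crl_ops T -> Prop) :
  forall T, crl_ops T -> Prop := fun T o => K T o /\ n_potent o n.
Definition npot_fle (n : nat) (K : forall T, fle_ops T -> Prop) :
  forall T, fle_ops T -> Prop := fun T o => K T o /\ n_potent (fcrl o) n.

Definition crl_hom {A B} (oA : crl_ops A) (oB : crl_ops B) (f : A -> B) : Prop :=
  (forall x y, f (rmeet oA x y) = rmeet oB (f x) (f y)) /\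
  (forall x y, f (rjoin oA x y) = rjoin oB (f x) (f y)) /\
  (forall x y, f (rmul oA x y) = rmul oB (f x) (f y)) /\
  (forall x y, f (rimp oA x y) = rimp oB (f x) (f y)) /\
  f (rone oA) = rone oB.

Definition crl_emb {A B} (oA : crl_ops A) (oB : crl_ops B) (f : A -> B) : Prop :=
  crl_hom oA oB f /\ (forall x y, f x = f y -> x = y).

Definition fle_emb {A B} (oA : fle_ops A) (oB : fle_ops B) (f : A -> B) : Prop :=
  crl_emb (fcrl oA) (fcrl oB) f /\ f (rzero oA) = rzero oB.

Definition AP_crl (K : forall T, crl_ops T -> Prop) : Prop :=
  forall (P Q R : Type) (oP : crl_ops P) (oQ : crl_ops Q) (oR : crl_ops R)
         (i : P -> Q) (j : P -> R),
    K P oP -> K Q oQ -> K R oR -> crl_emb oP oQ i -> crl_emb oP oR j ->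
    exists (D : Type) (oD : crl_ops D) (h : Q -> D) (k : R -> D),
      K D oD /\ crl_emb oQ oD h /\ crl_emb oR oD k /\
      (forall p, h (i p) = k (j p)).

Definition AP_fle (K : forall T, fle_ops T -> Prop) : Prop :=
  forall (P Q R : Type) (oP : fle_ops P) (oQ : fle_ops Q) (oR : fle_ops R)
         (i : P -> Q) (j : P -> R),
    K P oP -> K Q oQ -> K R oR -> fle_emb oP oQ i -> fle_emb oP oR j ->
    exists (D : Type) (oD : fle_ops D) (h : Q -> D) (k : R -> D),
      K D oD /\ fle_emb oQ oD h /\ fle_emb oR oD k /\
      (forall p, h (i p) = k (j p)).

(** Three finite chains do the job.  P = {0 < e < 1} with [e] idempotent embeds
    into Q = {0 < a < e < 1} (a² = 0, ae = a) and into R = {0 < c < b < e < 1}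
    (b² = 0, be = c).  In a semilinear amalgam put u = a → b and v = b → a.
    Since [a] and [b] both square to 0 and are their own negations, u and v
    swap [a] and [b]; hence u², v² ≤ b → be = e and uv ≤ a → a = 1.
    Semilinearity gives 1 ≤ u ∨ v, so 1 ≤ (u ∨ v)⁴ ≤ (e ∨ uv)² ≤ e, which
    contradicts e < 1 in Q.  Every class of the theorem contains these three
    2-potent MTL-chains and is contained in SemCRL. *)

From Stdlib Require Import Arith.

Set Implicit Arguments.

Section CRLTheory.

Variables (T : Type) (o : crl_ops T).
Hypothesis Ho : is_CRL o.

Local Notation "x ≤ y" := (rle o x y) (at level 70).
Local Notation "x ∨ y" := (rjoin o x y) (at level 50, left associativity).
Local Notation "x · y" := (rmul o x y) (at level 40, left associativity).
Local Notation "x ⊸ y" := (rimp o x y) (at level 45, right associativity).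
Local Notation one := (rone o).

Lemma meetC x y : rmeet o x y = rmeet o y x.  Proof. apply Ho. Qed.
Lemma joinC x y : x ∨ y = y ∨ x.             Proof. apply Ho. Qed.
Lemma meetA x y z : rmeet o x (rmeet o y z) = rmeet o (rmeet o x y) z.
Proof. apply Ho. Qed.
Lemma joinA x y z : x ∨ (y ∨ z) = x ∨ y ∨ z. Proof. apply Ho. Qed.
Lemma meetKU x y : rmeet o x (x ∨ y) = x.    Proof. apply Ho. Qed.
Lemma joinKI x y : x ∨ rmeet o x y = x.      Proof. apply Ho. Qed.
Lemma mulA x y z : x · (y · z) = x · y · z.  Proof. apply Ho. Qed.
Lemma mulC x y : x · y = y · x.              Proof. apply Ho. Qed.
Lemma mul1r x : x · one = x.                 Proof. apply Ho. Qed.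
Lemma residuation x y z : x · y ≤ z <-> y ≤ x ⊸ z.
Proof. apply Ho. Qed.

Lemma le_refl x : x ≤ x.
Proof. unfold rle. rewrite <- (joinKI x x) at 2. apply meetKU. Qed.

Lemma le_trans x y z : x ≤ y -> y ≤ z -> x ≤ z.
Proof.
  unfold rle. intros Hxy Hyz.
  rewrite <- Hxy at 1. rewrite <- meetA, Hyz. exact Hxy.
Qed.

Lemma leEjoin x y : x ≤ y <-> x ∨ y = y.
Proof.
  unfold rle. split; intro E; rewrite <- E.
  - rewrite joinC, meetC. apply joinKI.
  - apply meetKU.
Qed.

Lemma le_joinl x y : x ≤ x ∨ y.
Proof. apply meetKU. Qed.

Lemma le_joinr x y : y ≤ x ∨ y.
Proof. rewrite joinC. apply le_joinl. Qed.

Lemma join_le x y z : x ≤ z -> y ≤ z -> x ∨ y ≤ z.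
Proof.
  rewrite !leEjoin. intros Hx Hy.
  rewrite <- joinA, Hy. exact Hx.
Qed.

Lemma mul_imp_le x y : x · (x ⊸ y) ≤ y.
Proof. apply residuation, le_refl. Qed.

Lemma mul_le_mono x x' y y' : x ≤ x' -> y ≤ y' -> x · y ≤ x' · y'.
Proof.
  assert (monor : forall x y y', y ≤ y' -> x · y ≤ x · y').
  { intros a b b' Hb. apply residuation, le_trans with b'; trivial.
    apply residuation, le_refl. }
  intros Hx Hy. apply le_trans with (x · y'); auto.
  rewrite (mulC x), (mulC x'). auto.
Qed.

Lemma mul_le_monor x y y' : y ≤ y' -> x · y ≤ x · y'.
Proof. apply mul_le_mono, le_refl. Qed.

Lemma one_le_mul x y : one ≤ x -> one ≤ y -> one ≤ x · y.
Proof. intros Hx Hy. rewrite <- (mul1r one). apply mul_le_mono; trivial. Qed.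

Lemma mul_joinl_le x y z m : x · z ≤ m -> y · z ≤ m -> (x ∨ y) · z ≤ m.
Proof.
  rewrite !(mulC _ z), !residuation. apply join_le.
Qed.

Lemma mul_join_le x y z w m :
  x · z ≤ m -> x · w ≤ m -> y · z ≤ m -> y · w ≤ m -> (x ∨ y) · (z ∨ w) ≤ m.
Proof.
  intros. apply mul_joinl_le; rewrite mulC; apply mul_joinl_le; rewrite mulC; trivial.
Qed.

Section SelfNegatingNilpotents.

Hypothesis Hsl : semilinear o.
Variables a b z e : T.
Hypotheses (a_neg : a ⊸ z ≤ a) (a_sq : a · a ≤ z) (a_imp_a : a ⊸ a ≤ one)
           (a_le_ae : a ≤ a · e).
Hypotheses (b_neg : b ⊸ z ≤ b) (b_sq : b · b ≤ z) (b_imp_be : b ⊸ b · e ≤ e).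
Hypothesis e_idem : e · e ≤ e.

(* x (w y) = (w x) y ≤ y y ≤ z, and [x] is its own negation. *)
Lemma swap_le w x y : w · x ≤ y -> y · y ≤ z -> x ⊸ z ≤ x -> w · y ≤ x.
Proof.
  intros Hw Hy Hx. apply le_trans with (x ⊸ z); trivial.
  apply (residuation x). rewrite mulA, (mulC x).
  apply le_trans with (y · y); trivial. apply mul_le_mono; trivial. apply le_refl.
Qed.

Lemma swap_square_le w : w · a ≤ b -> w · b ≤ a -> w · w ≤ e.
Proof.
  intros Hwa Hwb. apply le_trans with (b ⊸ b · e); trivial.
  apply (residuation b). rewrite (mulC b), <- mulA.
  apply le_trans with (w · a). { apply mul_le_monor; trivial. }
  apply le_trans with (w · (a · e)). { apply mul_le_monor; trivial. }
  rewrite mulA. apply mul_le_mono; trivial. apply le_refl.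
Qed.

Lemma nilpotents_one_le : one ≤ e.
Proof.
  set (u := a ⊸ b). set (v := b ⊸ a).
  assert (ua : u · a ≤ b) by (rewrite mulC; apply mul_imp_le).
  assert (vb : v · b ≤ a) by (rewrite mulC; apply mul_imp_le).
  assert (ub : u · b ≤ a) by (apply swap_le; trivial).
  assert (va : v · a ≤ b) by (apply swap_le; trivial).
  assert (uu : u · u ≤ e) by (apply swap_square_le; trivial).
  assert (vv : v · v ≤ e) by (apply swap_square_le; trivial).
  assert (uv : u · v ≤ one).
  { apply le_trans with (a ⊸ a); trivial. apply (residuation a).
    rewrite mulC, <- mulA. apply le_trans with (u · b); trivial.
    apply mul_le_monor; trivial. }
  set (s := u ∨ v). set (m := e ∨ u · v).
  assert (one_le_s : one ≤ s) by apply Hsl.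
  assert (ss : s · s ≤ m).
  { apply mul_join_le.
    - apply le_trans with e; trivial. apply le_joinl.
    - apply le_joinr.
    - rewrite mulC. apply le_joinr.
    - apply le_trans with e; trivial. apply le_joinl. }
  assert (e_uv : e · (u · v) ≤ e).
  { rewrite <- (mul1r e) at 2. apply mul_le_monor; trivial. }
  assert (mm : m · m ≤ e).
  { apply mul_join_le; trivial.
    - rewrite mulC. trivial.
    - apply le_trans with (u · u · (v · v)).
      + rewrite !mulA, <- (mulA u v u), (mulC v u), mulA. apply le_refl.
      + apply le_trans with (e · e); trivial. apply mul_le_mono; trivial. }
  apply le_trans with (s · s · (s · s)).
  - apply one_le_mul; apply one_le_mul; trivial.
  - apply le_trans with (m · m); trivial. apply mul_le_mono; trivial.
Qed.

End SelfNegatingNilpotents.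

End CRLTheory.

Section Homomorphisms.

Variables (A B : Type) (oA : crl_ops A) (oB : crl_ops B) (f : A -> B).

Lemma crl_hom_mul : crl_hom oA oB f -> forall x y, f (rmul oA x y) = rmul oB (f x) (f y).
Proof. intros Hf. apply Hf. Qed.

Lemma crl_hom_imp : crl_hom oA oB f -> forall x y, f (rimp oA x y) = rimp oB (f x) (f y).
Proof. intros Hf. apply Hf. Qed.

Lemma crl_hom_one : crl_hom oA oB f -> f (rone oA) = rone oB.
Proof. intros Hf. apply Hf. Qed.

Lemma crl_hom_le : crl_hom oA oB f -> forall x y, rle oA x y -> rle oB (f x) (f y).
Proof. intros Hf x y Hxy. unfold rle. destruct Hf as [<- _]. now rewrite Hxy. Qed.

Lemma crl_emb_le : crl_emb oA oB f -> forall x y, rle oB (f x) (f y) -> rle oA x y.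
Proof.
  intros [Hf Hinj] x y Hxy. apply Hinj. destruct Hf as [-> _]. exact Hxy.
Qed.

End Homomorphisms.

Lemma n_potent_mono T (o : crl_ops T) m n : n_potent o m -> m <= n -> n_potent o n.
Proof.
  intros Hm Hmn x. induction Hmn as [|n _ IH].
  - apply Hm.
  - exact (f_equal (rmul o x) IH).
Qed.

Lemma MTL_SemCIRL T (o : fle_ops T) : MTL T o -> SemCIRL T (fcrl o).
Proof.
  intros (HC & Hintegral & _ & Hprelin). split; [split; [exact HC |] | exact Hintegral].
  intros x y. rewrite Hprelin. apply le_refl, HC.
Qed.

Definition min_by {X} (rank : X -> nat) (x y : X) : X := if rank x <=? rank y then x else y.
Definition max_by {X} (rank : X -> nat) (x y : X) : X := if rank x <=? rank y then y else x.

Inductive P3 := p0 | pe | p1.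

Definition rank_P3 (x : P3) : nat := match x with p0 => 0 | pe => 1 | p1 => 2 end.

Definition mul_P3 (x y : P3) : P3 :=
  match x, y with
  | p1, t | t, p1 => t
  | pe, pe => pe
  | _, _ => p0
  end.

Definition imp_P3 (x y : P3) : P3 := if rank_P3 x <=? rank_P3 y then p1 else y.

Definition oP3 : crl_ops P3 := CrlOps P3 (min_by rank_P3) (max_by rank_P3) mul_P3 imp_P3 p1.
Definition fP3 : fle_ops P3 := FleOps P3 oP3 p0.

Inductive Q4 := q0 | qa | qe | q1.

Definition rank_Q4 (x : Q4) : nat := match x with q0 => 0 | qa => 1 | qe => 2 | q1 => 3 end.

Definition mul_Q4 (x y : Q4) : Q4 :=
  match x, y with
  | q1, t | t, q1 => t
  | qe, qe => qe
  | qe, qa | qa, qe => qa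
  | _, _ => q0
  end.

Definition imp_Q4 (x y : Q4) : Q4 :=
  match x, y with
  | qa, q0 => qa
  | _, _ => if rank_Q4 x <=? rank_Q4 y then q1 else y
  end.

Definition oQ4 : crl_ops Q4 := CrlOps Q4 (min_by rank_Q4) (max_by rank_Q4) mul_Q4 imp_Q4 q1.
Definition fQ4 : fle_ops Q4 := FleOps Q4 oQ4 q0.

Inductive R5 := r0 | rc | rb | re | r1.

Definition rank_R5 (x : R5) : nat :=
  match x with r0 => 0 | rc => 1 | rb => 2 | re => 3 | r1 => 4 end.

Definition mul_R5 (x y : R5) : R5 :=
  match x, y with
  | r1, t | t, r1 => t
  | re, re => re
  | re, rb | rb, re | re, rc | rc, re => rc
  | _, _ => r0
  end.

Definition imp_R5 (x y : R5) : R5 :=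
  match x, y with
  | rc, r0 | rb, r0 | re, rc => rb
  | rb, rc => re
  | _, _ => if rank_R5 x <=? rank_R5 y then r1 else y
  end.

Definition oR5 : crl_ops R5 := CrlOps R5 (min_by rank_R5) (max_by rank_R5) mul_R5 imp_R5 r1.
Definition fR5 : fle_ops R5 := FleOps R5 oR5 r0.

Definition P3_to_Q4 (x : P3) : Q4 := match x with p0 => q0 | pe => qe | p1 => q1 end.
Definition P3_to_R5 (x : P3) : R5 := match x with p0 => r0 | pe => re | p1 => r1 end.

Ltac check_on_chains :=
  repeat intro;
  repeat match goal with
         | x : P3 |- _ => destruct x
         | x : Q4 |- _ => destruct x
         | x : R5 |- _ => destruct x
         end;
  cbv in *; first [reflexivity | discriminate].

Lemma P3_MTL : MTL P3 fP3.            Proof. repeat split; check_on_chains. Qed.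
Lemma Q4_MTL : MTL Q4 fQ4.            Proof. repeat split; check_on_chains. Qed.
Lemma R5_MTL : MTL R5 fR5.            Proof. repeat split; check_on_chains. Qed.
Lemma P3_2potent : n_potent oP3 2.    Proof. check_on_chains. Qed.
Lemma Q4_2potent : n_potent oQ4 2.    Proof. check_on_chains. Qed.
Lemma R5_2potent : n_potent oR5 2.    Proof. check_on_chains. Qed.

Lemma P3_to_Q4_emb : fle_emb fP3 fQ4 P3_to_Q4.
Proof. repeat split; check_on_chains. Qed.

Lemma P3_to_R5_emb : fle_emb fP3 fR5 P3_to_R5.
Proof. repeat split; check_on_chains. Qed.

Ltac transfer_le Hf :=
  repeat (rewrite <- (crl_hom_mul Hf) || rewrite <- (crl_hom_imp Hf)
          || rewrite <- (crl_hom_one Hf));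
  apply (crl_hom_le Hf); reflexivity.

Lemma no_semilinear_amalgam D (oD : crl_ops D) (h : Q4 -> D) (k : R5 -> D) :
  SemCRL D oD -> crl_emb oQ4 oD h -> crl_emb oR5 oD k ->
  (forall p, h (P3_to_Q4 p) = k (P3_to_R5 p)) -> False.
Proof.
  intros [HD Hsl] Hh Hk Hhk.
  assert (h0 : h q0 = k r0) by exact (Hhk p0).
  assert (he : h qe = k re) by exact (Hhk pe).
  assert (Hone : rle oD (rone oD) (h qe)).
  { apply (nilpotents_one_le (a := h qa) (b := k rb) (z := h q0) (e := h qe) HD Hsl);
      first [transfer_le (proj1 Hh) | rewrite ?h0, ?he; transfer_le (proj1 Hk)]. }
  rewrite <- (crl_hom_one (proj1 Hh)) in Hone.
  apply (crl_emb_le Hh) in Hone. discriminate Hone.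
Qed.

Lemma no_AP_crl (K : forall T, crl_ops T -> Prop) :
  (forall T o, SemCIRL T o -> n_potent o 2 -> K T o) ->
  (forall T o, K T o -> SemCRL T o) -> ~ AP_crl K.
Proof.
  intros Hlow Hup AP.
  assert (chain : forall X (f : fle_ops X), MTL X f -> n_potent (fcrl f) 2 -> K X (fcrl f))
    by (intros; apply Hlow; auto using MTL_SemCIRL).
  destruct (AP _ _ _ oP3 oQ4 oR5 P3_to_Q4 P3_to_R5
              (chain _ _ P3_MTL P3_2potent) (chain _ _ Q4_MTL Q4_2potent)
              (chain _ _ R5_MTL R5_2potent) (proj1 P3_to_Q4_emb) (proj1 P3_to_R5_emb))
    as (D & oD & h & k & HD & Hh & Hk & Hhk).
  exact (no_semilinear_amalgam (Hup _ _ HD) Hh Hk Hhk).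
Qed.

Lemma no_AP_fle (K : forall T, fle_ops T -> Prop) :
  (forall T o, MTL T o -> n_potent (fcrl o) 2 -> K T o) ->
  (forall T o, K T o -> SemFLe T o) -> ~ AP_fle K.
Proof.
  intros Hlow Hup AP.
  destruct (AP _ _ _ fP3 fQ4 fR5 P3_to_Q4 P3_to_R5
              (Hlow _ _ P3_MTL P3_2potent) (Hlow _ _ Q4_MTL Q4_2potent)
              (Hlow _ _ R5_MTL R5_2potent) P3_to_Q4_emb P3_to_R5_emb)
    as (D & oD & h & k & HD & Hh & Hk & Hhk).
  exact (no_semilinear_amalgam (Hup _ _ HD) (proj1 Hh) (proj1 Hk) Hhk).
Qed.

Theorem mainTheorem5 :
  ~ AP_crl SemCRL /\ ~ AP_crl SemCIRL /\ ~ AP_fle SemFLe /\ ~ AP_fle MTL /\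
  (forall n : nat, 2 <= n ->
     ~ AP_crl (npot_crl n SemCRL) /\ ~ AP_crl (npot_crl n SemCIRL) /\
     ~ AP_fle (npot_fle n SemFLe) /\ ~ AP_fle (npot_fle n MTL)).
Proof.
  split; [|split; [|split; [|split]]]; [..| intros n Hn; split; [|split; [|split]]].
  all: first [apply no_AP_crl | apply no_AP_fle]; intros T o;
       try pose proof (@MTL_SemCIRL T o); unfold npot_crl, npot_fle, SemCIRL, SemFLe in *;
       intuition eauto using n_potent_mono.
Qed.
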